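(* The evaluation homomorphism $\mathrm{ev}:Y\to U(\mathfrak{gl}_{1|1})$ factors to a surjective algebra homomorphism $\mathrm{ev}^{[p]}:Y^{[p]}\to U^{[p]}(\mathfrak{gl}_{1|1})$.
   Context: Let $k$ be an algebraically closed field of characteristic $p>2$, parities $|1|=0$, $|2|=1$. $Y=Y_{1|1}$ is the superalgebra over $k$ with generators $t_{i,j}^{(r)}$ ($1\le i,j\le2$, $r>0$, parity $|i|+|j|$) and relations $[t_{i,j}^{(r)},t_{k,l}^{(s)}]=(-1)^{|i||j|+|i||k|+|j||k|}\sum_{t=0}^{\min(r,s)-1}(t_{k,j}^{(t)}t_{i,l}^{(r+s-1-t)}-t_{k,j}^{(r+s-1-t)}t_{i,l}^{(t)})$, $t_{i,j}^{(0)}=\delta_{ij}$; $t_{i,j}(u)=\sum_{r\ge0}t_{i,j}^{(r)}u^{-r}$. Define $d_1,d_2,e,f$ by $t_{1,1}=d_1$, $t_{1,2}=d_1e$, $t_{2,1}=fd_1$, $t_{2,2}=fd_1e+d_2$; $b_1(u)=d_1(u)d_1(u-1)\cdots d_1(u-p+1)$, $b_2(u)=d_2(u)^{-1}\cdots d_2(u-p+1)^{-1}$ with coefficients $b_i^{(r)}$. The restricted super Yangian is $Y^{[p]}=Y/YZ_p(Y)_+$, where $Z_p(Y)_+$ is the ideal of the central subalgebra $Z_p(Y)$ generated by the $b_i^{(rp)}$ ($i=1,2$, $r>0$) generated by these elements. The evaluation homomorphism $\mathrm{ev}:Y\to U(\mathfrak{gl}_{1|1})$ is the surjective homomorphism with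 $\mathrm{ev}(t_{i,j}(u))=\delta_{i,j}+(-1)^{|i|}e_{i,j}u^{-1}$, $e_{i,j}$ the elementary matrices. $J_p$ is the ideal of $U(\mathfrak{gl}_{1|1})$ generated by the central elements $e_{i,i}^p-e_{i,i}$ ($i=1,2$), and $U^{[p]}(\mathfrak{gl}_{1|1})=U(\mathfrak{gl}_{1|1})/J_p$ is the restricted enveloping algebra. *)

From HB Require Import structures.
From mathcomp Require Import all_boot all_order all_algebra.
Set Implicit Arguments. Unset Strict Implicit. Unset Printing Implicit Defensive.
Import GRing.Theory.
Local Open Scope ring_scope.

(** * Formal power series in u^{-1} with (noncommutative) coefficients.
    A series is its coefficient function: f n = coefficient of u^{-n}. *)
Section Series.
Variable R : nzRingType.

Definition sone : nat -> R := fun n => (n == 0)%:R.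
Definition ssub (f g : nat -> R) : nat -> R := fun n => f n - g n.
Definition smul (f g : nat -> R) : nat -> R :=
  fun n => \sum_(i < n.+1) f i * g (n - i)%N.
Fixpoint spow (f : nat -> R) (m : nat) : nat -> R :=
  if m is m'.+1 then smul f (spow f m') else sone.
(** inverse of a series with constant term 1: sum_m (1 - f)^m
    (the m-th power has no coefficients below u^{-m}). *)
Definition sinv (f : nat -> R) : nat -> R :=
  fun n => \sum_(m < n.+1) spow (ssub sone f) m n.
(** substitution u |-> u - a:  (u-a)^{-r} = sum_{n>=r} C(n-1,n-r) a^{n-r} u^{-n} *)
Definition sshift (a : nat) (f : nat -> R) : nat -> R :=
  fun n => if n == 0%N then f 0%N else
    \sum_(r < n) ('C(n.-1, (n.-1 - r)%N) * a ^ (n.-1 - r))%N%:R * f r.+1.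
End Series.

(** parities: index 0 <-> "1" (even), index 1 <-> "2" (odd) *)
Definition par (i : 'I_2) : nat := (i == 1 :> 'I_2).
Definition sgn (R : nzRingType) (n : nat) : R := (-1) ^+ n.

Definition tser (R : nzRingType) (t : 'I_2 -> 'I_2 -> nat -> R) (i j : 'I_2) :
  nat -> R := fun r => if r == 0%N then (i == j)%:R else t i j r.

Definition YRel (R : nzRingType) (t : 'I_2 -> 'I_2 -> nat -> R) : Prop :=
  forall (i j a b : 'I_2) (r s : nat), (0 < r)%N -> (0 < s)%N ->
    t i j r * t a b s
      - sgn R ((par i + par j) * (par a + par b)) * t a b s * t i j r
    = sgn R (par i * par j + par i * par a + par j * par a)
      * \sum_(m < minn r s)
          (tser t a j m * tser t i b (r + s - 1 - m)
           - tser t a j (r + s - 1 - m) * tser t i b m).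

Definition URel (R : nzRingType) (e : 'I_2 -> 'I_2 -> R) : Prop :=
  forall (i j a b : 'I_2),
    e i j * e a b - sgn R ((par i + par j) * (par a + par b)) * e a b * e i j
    = (j == a)%:R * e i b
      - sgn R ((par i + par j) * (par a + par b)) * (i == b)%:R * e a j.

Definition alg_hom (k : fieldType) (A B : algType k) (f : A -> B) : Prop :=
  (forall x y, f (x + y) = f x + f y) /\ (forall (c : k) x, f (c *: x) = c *: f x)
  /\ f 1 = 1 /\ (forall x y, f (x * y) = f x * f y).

Definition surj (A B : Type) (f : A -> B) : Prop := forall z, exists y, f y = z.

(** (Y, t) is the algebra presented by generators t_{ij}^{(r)} (r>0) and the
    relations YRel (universal property). *)
Definition is_Yangian (k : fieldType) (Y : algType k)
    (t : 'I_2 -> 'I_2 -> nat -> Y) : Prop :=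
  YRel t /\
  (forall (B : algType k) (t' : 'I_2 -> 'I_2 -> nat -> B), YRel t' ->
     exists f : Y -> B, alg_hom f /\
       forall i j r, (0 < r)%N -> f (t i j r) = t' i j r) /\
  (forall (B : algType k) (f g : Y -> B), alg_hom f -> alg_hom g ->
     (forall i j r, (0 < r)%N -> f (t i j r) = g (t i j r)) -> forall y, f y = g y).

(** (U, e) is U(gl_{1|1}), presented by generators e_{ij} and relations URel. *)
Definition is_Ugl11 (k : fieldType) (U : algType k) (e : 'I_2 -> 'I_2 -> U) : Prop :=
  URel e /\
  (forall (B : algType k) (e' : 'I_2 -> 'I_2 -> B), URel e' ->
     exists f : U -> B, alg_hom f /\ forall i j, f (e i j) = e' i j) /\
  (forall (B : algType k) (f g : U -> B), alg_hom f -> alg_hom g ->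
     (forall i j, f (e i j) = g (e i j)) -> forall x, f x = g x).

(** Gauss decomposition: d_1(u) = t_{11}(u),
    d_2(u) = t_{22}(u) - t_{21}(u) t_{11}(u)^{-1} t_{12}(u). *)
Definition d1ser (R : nzRingType) (t : 'I_2 -> 'I_2 -> nat -> R) : nat -> R :=
  tser t 0 0.
Definition d2ser (R : nzRingType) (t : 'I_2 -> 'I_2 -> nat -> R) : nat -> R :=
  ssub (tser t 1 1) (smul (smul (tser t 1 0) (sinv (tser t 0 0))) (tser t 0 1)).

Definition bser (R : nzRingType) (p : nat) (t : 'I_2 -> 'I_2 -> nat -> R)
    (i : 'I_2) : nat -> R :=
  if i == 0 :> 'I_2 then \big[@smul R/@sone R]_(a < p) sshift a (d1ser t)
  else \big[@smul R/@sone R]_(a < p) sinv (sshift a (d2ser t)).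

Definition in_lideal (R : nzRingType) (S : R -> Prop) (x : R) : Prop :=
  exists n (a g : 'I_n -> R), (forall m, S (g m)) /\ x = \sum_(m < n) a m * g m.

Definition in_ideal (R : nzRingType) (S : R -> Prop) (x : R) : Prop :=
  exists n (a g c : 'I_n -> R), (forall m, S (g m)) /\
    x = \sum_(m < n) a m * g m * c m.

(* Modulo J_p the elements x = e_11, y = e_22 and z = e_21 e_12 of U(gl_{1|1})
   commute and satisfy x^p = x, y^p = y and z^2 = (x + y) z.  Evaluation sends
   d_1(u) to 1 + x/u and d_2(u) to 1 - y/u + z/(u (u + x + 1)), so b_1(u) and
   b_2(u)^-1 become products, over a in F_p, of these series shifted by a.
   As prod_(a in F_p) (T - a) = T^p - T, the linear factors of b_1(u) cancel
   because x^p = x; the quadratic factors of b_2(u) are handled by splitting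
   along the idempotent (x + y)^(p-1).  Hence every b_i^(rp) is killed, ev
   descends to Y^[p], and it stays surjective since ev(t_ij^(1)) = +-e_ij. *)

From HB Require Import structures.
From mathcomp Require Import all_boot all_order all_algebra.
From mathcomp Require Import boolp finfield.
From mathcomp Require Import ring zify.
Set Implicit Arguments. Unset Strict Implicit. Unset Printing Implicit Defensive.
Import GRing.Theory.
Local Open Scope ring_scope.

(** * The polynomial [prod_(a in F_p) (T - a)] *)

Lemma prod_XsubC_pchar (F : fieldType) (p : nat) : p \in [pchar F] ->
  \prod_(a < p) ('X - (a%:R)%:P) = 'X^p - 'X :> {poly F}.
Proof.
move=> chF; have p_gt1 := prime_gt1 (pcharf_prime chF).
have sizeP : size ('X^p - 'X : {poly F}) = p.+1.
  by rewrite size_polyDl ?size_polyXn // size_polyN size_polyX ltnS.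
have monicP : lead_coef ('X^p - 'X : {poly F}) = 1.
  by rewrite lead_coefDl ?lead_coefXn // size_polyXn size_polyN size_polyX ltnS.
pose rs : seq F := [seq (a : nat)%:R | a : 'I_p].
have := @all_roots_prod_XsubC _ ('X^p - 'X) rs; rewrite monicP scale1r => ->.
- by rewrite big_image.
- by rewrite sizeP size_map size_enum_ord.
- apply/allP => _ /mapP[a _ ->].
  by rewrite /root !hornerE -(pFrobenius_autE chF) pFrobenius_aut_nat subrr.
rewrite uniq_rootsE map_inj_uniq ?enum_uniq // => a b /eqP.
wlog ab : a b / (a <= b)%N => [hwlog|].
  by case: (leqP a b) => [/hwlog//|/ltnW/hwlog hba]; rewrite eq_sym => /hba.
rewrite eq_sym -subr_eq0 -natrB // -(dvdn_pcharf chF) => /dvdn_leq dvd.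
apply/val_inj/eqP; rewrite eqn_leq ab -subn_eq0; apply/contraT; rewrite -lt0n.
by move/dvd; rewrite leqNgt (leq_ltn_trans (leq_subr _ _) (ltn_ord b)).
Qed.

Section Homogenization.
Variable R : comNzRingType.
Implicit Types (P : {poly R}) (Z W c : R).

Definition homog (d : nat) P Z W := \sum_(j < d.+1) P`_j * Z ^+ j * W ^+ (d - j).

Lemma homogM_XsubC d P c Z W : (size P <= d.+1)%N ->
  homog d.+1 (('X - c%:P) * P) Z W = (Z - c * W) * homog d P Z W.
Proof.
move=> sizeP; rewrite /homog mulrBl [RHS]mulrBl.
under eq_bigr do rewrite coefB coefCM !mulrBl.
rewrite sumrB; congr (_ - _).
  rewrite big_ord_recl coefXM /= !mul0r add0r mulr_sumr.
  by apply: eq_bigr => i _; rewrite coefXM /= /bump /= add1n subSS exprS; ring.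
rewrite big_ord_recr /= nth_default // mulr0 !mul0r addr0 mulr_sumr.
apply: eq_bigr => i _; rewrite subSn; last by rewrite -ltnS.
by rewrite exprS; ring.
Qed.

Lemma homog_prod_XsubC n (c : nat -> R) Z W :
  homog n (\prod_(a < n) ('X - (c a)%:P)) Z W = \prod_(a < n) (Z - c a * W).
Proof.
elim: n => [|n IH]; first by rewrite !big_ord0 /homog big_ord1 coefC /= !expr0 !mulr1.
rewrite !big_ord_recr /= mulrC homogM_XsubC; first by rewrite IH mulrC.
by rewrite size_prod_XsubC /index_enum /= -enumT size_enum_ord.
Qed.

Lemma homogB d P Q Z W : homog d (P - Q) Z W = homog d P Z W - homog d Q Z W.
Proof. by rewrite /homog -sumrB; apply: eq_bigr => j _; rewrite coefB !mulrBl. Qed.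

Lemma homogXn d m Z W : (m <= d)%N -> homog d 'X^m Z W = Z ^+ m * W ^+ (d - m).
Proof.
move=> le_md; rewrite /homog (bigD1 (Ordinal (le_md : m < d.+1)%N)) //=.
rewrite coefXn eqxx mul1r big1 ?addr0 // => j ne_jm.
rewrite coefXn; case: eqP => [jm|_]; last by rewrite !mul0r.
by case/eqP: ne_jm; apply: val_inj.
Qed.

Lemma homog_XnsubX n Z W : (1 < n)%N -> homog n ('X^n - 'X) Z W = Z ^+ n - Z * W ^+ n.-1.
Proof.
move=> n_gt1; rewrite homogB homogXn // subnn mulr1.
by rewrite (homogXn Z W (ltnW n_gt1) : homog n 'X Z W = _) subn1.
Qed.

End Homogenization.

(* [X^p - X] splits over the prime field; transport along [F_p -> R] and homogenize. *)
Lemma prod_sub_natM_pchar (R : comNzRingType) (p : nat) (Z W : R) : p \in [pchar R] ->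
  \prod_(a < p) (Z - a%:R * W) = Z ^+ p - Z * W ^+ p.-1.
Proof.
move=> chR; have p_pr := pcharf_prime chR.
pose Rp := pPrimeCharType chR.
have := congr1 (map_poly (in_alg Rp)) (prod_XsubC_pchar (pchar_Fp p_pr)).
rewrite rmorph_prod rmorphB /= map_polyXn map_polyX.
under eq_bigr do rewrite map_polyXsubC rmorph_nat.
move/(congr1 (fun P => homog p P (Z : Rp) W)).
rewrite homog_prod_XsubC homog_XnsubX //; exact: prime_gt1.
Qed.

(** * Power series in [u^-1] *)

Section PowerSeries.
Variable C : comNzRingType.

Definition ser := nat -> C.
HB.instance Definition _ := Choice.on ser.

Definition sadd (f g : ser) : ser := fun n => f n + g n.
Definition sopp (f : ser) : ser := fun n => - f n.
Definition szero : ser := fun _ => 0.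

Lemma saddA : associative sadd.
Proof. by move=> f g h; apply: funext => n; rewrite /sadd addrA. Qed.
Lemma saddC : commutative sadd.
Proof. by move=> f g; apply: funext => n; rewrite /sadd addrC. Qed.
Lemma sadd0 : left_id szero sadd.
Proof. by move=> f; apply: funext => n; rewrite /sadd add0r. Qed.
Lemma saddN : left_inverse szero sopp sadd.
Proof. by move=> f; apply: funext => n; rewrite /sadd /sopp addNr. Qed.
HB.instance Definition _ := GRing.isZmodule.Build ser saddA saddC sadd0 saddN.

(* A coefficient of a product only involves the truncations below it, so
   the ring laws for [smul] are inherited from polynomials. *)
Definition ser_trunc (m : nat) (f : ser) : {poly C} := \poly_(i < m.+1) f i.

Lemma smul_ser_trunc (f g : ser) n m :
  (n <= m)%N -> smul f g n = (ser_trunc m f * ser_trunc m g)`_n.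
Proof.
move=> le_nm; rewrite coefM /smul; apply: eq_bigr => i _; rewrite !coef_poly.
by rewrite (leq_trans (ltn_ord i)) // ltnS (leq_trans (leq_subr _ _)).
Qed.

Lemma smulA : associative (@smul C : ser -> ser -> ser).
Proof.
move=> f g h; apply: funext => n.
have -> : smul f (smul g h) n = (ser_trunc n f * (ser_trunc n g * ser_trunc n h))`_n.
  rewrite coefM /smul; apply: eq_bigr => i _.
  by rewrite -(smul_ser_trunc g h (leq_subr i n)) coef_poly ltn_ord.
have -> : smul (smul f g) h n = (ser_trunc n f * ser_trunc n g * ser_trunc n h)`_n.
  rewrite coefM /smul; apply: eq_bigr => i _.
  by rewrite -(smul_ser_trunc f g (ltnSE (ltn_ord i))) coef_poly ltnS leq_subr.
by rewrite mulrA.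
Qed.

Lemma smulC : commutative (@smul C : ser -> ser -> ser).
Proof. by move=> f g; apply: funext => n; rewrite !(smul_ser_trunc _ _ (leqnn n)) mulrC. Qed.

Lemma smul1 : left_id (@sone C : ser) (@smul C).
Proof.
move=> f; apply: funext => n; rewrite /smul big_ord_recl /sone /= mul1r subn0.
by rewrite big1 ?addr0 // => i _; rewrite mul0r.
Qed.

Lemma smulDl : left_distributive (@smul C : ser -> ser -> ser) +%R.
Proof.
move=> f g h; apply: funext => n; transitivity (smul f h n + smul g h n) => //.
by rewrite /smul -big_split; apply: eq_bigr => i _; apply: mulrDl.
Qed.

Lemma sone_neq0 : (@sone C : ser) != 0.
Proof. by apply/eqP => /(congr1 (fun f : ser => f 0%N))/eqP; rewrite oner_eq0. Qed.

HB.instance Definition _ :=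
  GRing.Zmodule_isComNzRing.Build ser smulA smulC smul1 smulDl sone_neq0.

Implicit Types (f g h : ser) (c : C).

Lemma serM f g n : (f * g) n = \sum_(i < n.+1) f i * g (n - i)%N. Proof. by []. Qed.
Lemma serD f g n : (f + g) n = f n + g n. Proof. by []. Qed.
Lemma serB f g n : (f - g) n = f n - g n. Proof. by []. Qed.
Lemma ser1 n : (1 : ser) n = (n == 0%N)%:R. Proof. by []. Qed.
Lemma ser_sum (I : Type) (r : seq I) (P : pred I) (F : I -> ser) n :
  (\sum_(i <- r | P i) F i) n = \sum_(i <- r | P i) F i n.
Proof. exact: (big_morph (fun g : ser => g n)). Qed.

Definition serC c : ser := fun n => if n == 0%N then c else 0.
Definition serX : ser := fun n => (n == 1%N)%:R.
Definition geom c : ser := fun n => c ^+ n.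

Lemma serCM_coef c f n : (serC c * f) n = c * f n.
Proof.
rewrite serM big_ord_recl subn0 /serC /=.
by rewrite big1 ?addr0 // => i _; rewrite mul0r.
Qed.

Lemma serXM_coef f n : (serX * f) n = if n is n'.+1 then f n' else 0.
Proof.
rewrite serM big_ord_recl /serX /= mul0r add0r; case: n => [|n]; first by rewrite big_ord0.
rewrite big_ord_recl /= mul1r subSS subn0 big1 ?addr0 // => i _.
by rewrite /bump /= mul0r.
Qed.

Lemma serX2M_coef f n : (serX ^+ 2 * f) n = if n is n'.+2 then f n' else 0.
Proof. by rewrite expr2 -mulrA serXM_coef; case: n => // n; rewrite serXM_coef. Qed.

Lemma serC_is_nmod_morphism : nmod_morphism serC.
Proof.
split; first by apply: funext => n; rewrite /serC; case: eqP.
by move=> c d; apply: funext => n; rewrite serD /serC; case: eqP; rewrite ?addr0.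
Qed.

Lemma serC_is_monoid_morphism : monoid_morphism serC.
Proof.
split; first by apply: funext => n; rewrite ser1 /serC; case: eqP.
move=> c d; apply: funext => n; rewrite serCM_coef /serC.
by case: eqP; rewrite ?mulr0.
Qed.

HB.instance Definition _ := GRing.isNmodMorphism.Build C ser serC serC_is_nmod_morphism.
HB.instance Definition _ := GRing.isMonoidMorphism.Build C ser serC serC_is_monoid_morphism.

Lemma serX_lreg : GRing.lreg serX.
Proof.
move=> f g eq_fg; apply: funext => n.
by have := congr1 (fun h : ser => h n.+1) eq_fg; rewrite !serXM_coef.
Qed.

Lemma coef_expr_lt g m n : g 0%N = 0 -> (n < m)%N -> (g ^+ m) n = 0.
Proof.
move=> g0; elim: m n => [//|m IH] n lt_nm.
rewrite exprS serM big1 // => i _.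
case: (posnP i) => [->|i_gt0]; first by rewrite g0 mul0r.
by rewrite IH ?mulr0 //; have := ltn_ord i; lia.
Qed.

Lemma serX_expr0 m : (0 < m)%N -> (serX ^+ m) 0%N = 0.
Proof. exact: coef_expr_lt. Qed.

Lemma serM_eq_low f g1 g2 n : (forall m, (m <= n)%N -> g1 m = g2 m) ->
  (f * g1) n = (f * g2) n.
Proof. by move=> eq_g; rewrite !serM; apply: eq_bigr => i _; rewrite eq_g ?leq_subr. Qed.

Lemma spowE f m : spow f m = f ^+ m.
Proof. by elim: m => [|m IH] //=; rewrite exprS IH. Qed.

Lemma mulr_sinv f : f 0%N = 1 -> f * sinv f = 1.
Proof.
move=> f0; have g0 : (1 - f) 0%N = 0 by rewrite serB f0 ser1 subrr.
apply: funext => n; pose G : ser := \sum_(m < n.+1) (1 - f) ^+ m.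
have -> : (f * sinv f) n = (f * G) n.
  apply: serM_eq_low => m le_mn; rewrite /sinv /G ser_sum.
  rewrite (big_ord_widen n.+1 (fun i => spow (1 - f) i m)) // big_mkcond /=.
  apply: eq_bigr => i _; rewrite spowE; case: ifP => // /negbT.
  by rewrite -leqNgt => lt_mi; rewrite coef_expr_lt.
have -> : f * G = 1 - (1 - f) ^+ n.+1.
  by rewrite -[RHS]opprB (subrX1 (1 - f) n.+1) -/G; ring.
by rewrite serB coef_expr_lt ?subr0.
Qed.

Lemma ser_rreg f : f 0%N = 1 -> GRing.rreg f.
Proof.
move=> f0 g h eq_gh; have inv_f := mulr_sinv f0.
by rewrite -[g]mulr1 -[h]mulr1 -inv_f !mulrA eq_gh.
Qed.

Lemma mul_geom c : (1 - serC c * serX) * geom c = 1.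
Proof.
apply: funext => n; rewrite mulrBl mul1r serB -mulrA serCM_coef serXM_coef /geom ser1.
by case: n => [|n]; rewrite ?mulr0 ?subr0 ?expr0 // exprS subrr.
Qed.

End PowerSeries.

Section Shift.
Variable C : comNzRingType.
Local Notation S := (ser C).
Local Notation X := (serX C).
Implicit Types (f g : S) (c : C) (a : nat).

Lemma sshift_coefS a f n : sshift a f n.+1 =
  \sum_(r < n.+1) 'C(n, r)%:R * a%:R ^+ (n - r) * f r.+1.
Proof.
rewrite /sshift /=; apply: eq_bigr => r _.
by rewrite bin_sub ?natrM ?natrX // -ltnS.
Qed.

Lemma sshiftD a f g : sshift a (f + g) = (sshift a f : S) + sshift a g.
Proof.
apply: funext => -[|n] //; rewrite serD !sshift_coefS -big_split /=.
by apply: eq_bigr => r _; rewrite serD mulrDr.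
Qed.

Lemma sshiftCM a c f : sshift a (serC c * f) = serC c * (sshift a f : S).
Proof.
apply: funext => -[|n]; rewrite serCM_coef; first by rewrite /sshift /= serCM_coef.
rewrite !sshift_coefS mulr_sumr.
by apply: eq_bigr => r _; rewrite serCM_coef; ring.
Qed.

Lemma sshift1 a : sshift a (1 : S) = 1 :> S.
Proof. by apply: funext => -[|n] //; rewrite sshift_coefS big1 // => r _; rewrite mulr0. Qed.

Lemma sshiftX a : sshift a X = X * geom a%:R.
Proof.
apply: funext => -[|n]; rewrite serXM_coef //= sshift_coefS big_ord_recl /=.
rewrite /serX /= bin0 mulr1 subn0 mul1r big1 ?addr0 // => r _.
by rewrite /bump /= mulr0.
Qed.

(* With [X = 1/u], [X^2 geom c = 1/(u (u - c))], shifted to [1/((u - a) (u - a - c))]. *)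
Lemma sshiftX2_geom a c :
  (1 - serC a%:R * X) * (sshift a (X ^+ 2 * geom c) : S) = X ^+ 2 * geom (a%:R + c).
Proof.
set s := sshift a _.
have s0 : s 0%N = 0 by rewrite /s /sshift /= serX2M_coef.
have s1 : s 1%N = 0 by rewrite /s sshift_coefS big_ord1 serX2M_coef mulr0.
have sS m : s m.+2 = \sum_(r < m.+1) 'C(m.+1, r.+1)%:R * a%:R ^+ (m - r) * c ^+ r.
  rewrite /s sshift_coefS big_ord_recl serX2M_coef mulr0 add0r.
  by apply: eq_bigr => r _; rewrite serX2M_coef.
apply: funext => n; rewrite mulrBl mul1r serB -mulrA serCM_coef serXM_coef serX2M_coef.
case: n => [|[|m]]; rewrite ?s0 ?s1 ?mulr0 ?subr0 //.
case: m => [|m].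
  by rewrite sS s1 big_ord1 mulr0 subr0 /geom binn !expr0 !mulr1.
rewrite !sS /geom exprDn.
have -> : \sum_(r < m.+2) 'C(m.+2, r.+1)%:R * a%:R ^+ (m.+1 - r) * c ^+ r =
   \sum_(r < m.+2) 'C(m.+1, r.+1)%:R * a%:R ^+ (m.+1 - r) * c ^+ r +
   \sum_(r < m.+2) 'C(m.+1, r)%:R * a%:R ^+ (m.+1 - r) * c ^+ r.
  by rewrite -big_split /=; apply: eq_bigr => r _; rewrite binS natrD; ring.
have -> : \sum_(r < m.+2) 'C(m.+1, r.+1)%:R * a%:R ^+ (m.+1 - r) * c ^+ r =
   a%:R * \sum_(r < m.+1) 'C(m.+1, r.+1)%:R * a%:R ^+ (m - r) * c ^+ r.
  rewrite big_ord_recr /= bin_small // !mul0r addr0 mulr_sumr.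
  apply: eq_bigr => i _; rewrite subSn; last by rewrite -ltnS.
  by rewrite exprS; ring.
by rewrite addrAC subrr add0r; apply: eq_bigr => i _; rewrite mulr_natl; ring.
Qed.

End Shift.

Section IdempotentProducts.
Variable R : comNzRingType.
Implicit Types (u w : R) (F G : nat -> R).

Lemma prod_split_idem n u F G : u * u = u ->
  \prod_(a < n) (F a + u * G a) =
    (1 - u) * \prod_(a < n) F a + u * \prod_(a < n) (F a + G a).
Proof.
move=> uu; elim: n => [|n IH]; first by rewrite !big_ord0; ring.
rewrite !big_ord_recr /= IH; set PF := \prod_(i < n) F i; set PG := \prod_(i < n) _.
apply/eqP; rewrite -subr_eq0; apply/eqP.
transitivity ((u * u - u) * (PG * G n - PF * G n)); first by ring.
by rewrite uu subrr mul0r.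
Qed.

Lemma mul_prod_eq n u F G : (forall a, u * F a = u * G a) ->
  u * \prod_(a < n) F a = u * \prod_(a < n) G a.
Proof.
move=> eqFG; elim: n => [|n IH]; first by rewrite !big_ord0.
by rewrite !big_ord_recr /= mulrA IH mulrAC eqFG mulrAC -mulrA.
Qed.

Lemma prod_1Dsqr0 n w G : w * w = 0 ->
  \prod_(a < n) (1 + w * G a) = 1 + w * \sum_(a < n) G a.
Proof.
move=> ww; elim: n => [|n IH]; first by rewrite !big_ord0 mulr0 addr0.
rewrite big_ord_recr big_ord_recr /= IH.
transitivity (1 + w * (\sum_(i < n) G i + G n) + (w * w) * ((\sum_(i < n) G i) * G n)).
  by ring.
by rewrite ww mul0r addr0.
Qed.

End IdempotentProducts.

Lemma exprDn_prime (R : comNzRingType) (p : nat) (x y : R) : p \in [pchar R] ->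
  (x + y) ^+ p = x ^+ p + y ^+ p.
Proof. by move=> chR; rewrite exprDn_pchar // pnatE ?(pcharf_prime chR). Qed.

Lemma exprNn_prime (R : comNzRingType) (p : nat) (x : R) : p \in [pchar R] ->
  (- x) ^+ p = - x ^+ p.
Proof. by move=> chR; rewrite exprNn_pchar // pnatE ?(pcharf_prime chR). Qed.

Section FrobeniusProducts.
Variables (C : comNzRingType) (p : nat).
Hypothesis chC : p \in [pchar C].
Local Notation S := (ser C).
Local Notation X := (serX C).
Local Notation E := (1 - X ^+ p.-1 : S).

Let p_pr : prime p. Proof. exact: pcharf_prime chC. Qed.

Lemma pchar_ser : p \in [pchar S].
Proof. by apply/andP; split=> //; rewrite -(rmorph_nat (@serC C)) (pcharf0 chC) rmorph0. Qed.

Definition linX (w : C) (a : nat) : S := 1 - serC (a%:R + w) * X.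

Lemma linX_coef0 w a : linX w a 0%N = 1.
Proof. by rewrite /linX serB serCM_coef mulr0 subr0. Qed.

(* The homogenization of [prod_(a in F_p) (T - a) = T^p - T] at [T = 1/X - w]. *)
Lemma prod_linX (w : C) : \prod_(a < p) linX w a = E - serC (w ^+ p - w) * X ^+ p.
Proof.
rewrite (eq_bigr (fun a : 'I_p => 1 - serC w * X - (a : nat)%:R * X)); last first.
  by move=> a _; rewrite /linX rmorphD rmorph_nat; ring.
rewrite prod_sub_natM_pchar ?pchar_ser //.
rewrite exprDn_prime ?pchar_ser // exprNn_prime ?pchar_ser //.
rewrite exprMn -rmorphXn expr1n rmorphB.
have -> : X ^+ p = X * X ^+ p.-1 by rewrite -exprS prednK // prime_gt0.
ring.
Qed.

Lemma prod_linX_fixed (w : C) : w ^+ p = w -> \prod_(a < p) linX w a = E.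
Proof. by move=> wp; rewrite prod_linX wp subrr rmorph0 mul0r subr0. Qed.

Lemma E_coef0 : E 0%N = 1.
Proof. by rewrite serB serX_expr0 ?subr0 // -ltnS prednK ?prime_gt1 ?prime_gt0. Qed.

Lemma EE_coef0 : (E * E) 0%N = 1.
Proof. by rewrite serM big_ord1 E_coef0 mulr1. Qed.

End FrobeniusProducts.

(** * The evaluated Gauss factors *)

Section EvaluatedGaussFactors.
Variables (C : comNzRingType) (p : nat).
Hypotheses (chC : p \in [pchar C]) (p_gt2 : (2 < p)%N).
Local Notation S := (ser C).
Local Notation X := (serX C).
Local Notation E := (1 - X ^+ p.-1 : S).
Local Notation linX := (@linX C).
Local Notation sinvS f := (sinv f : S).

Let p_pr : prime p. Proof. exact: pcharf_prime chC. Qed.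

Lemma natr_ord_pred (a : 'I_p) : ((ord_pred a : nat)%:R : C) = (a : nat)%:R - 1.
Proof.
rewrite /= (GRing.natr_mod_pchar chC).
case: p (pcharf0 chC) (prime_gt0 p_pr) a => // n pn0 _ a.
by rewrite addnS /= natrD -[n%:R](addrK 1) natr1 pn0 add0r.
Qed.

Lemma linXM_coef0 v w a : (linX v a * linX w a) 0%N = 1.
Proof. by rewrite serM big_ord1 !linX_coef0 mulr1. Qed.

Let fixed0 : (0 : C) ^+ p = 0. Proof. by rewrite expr0n gtn_eqF ?prime_gt0. Qed.

Variable x : C.
Hypothesis hx : x ^+ p = x.

Let fixedNx : (- x) ^+ p = - x. Proof. by rewrite exprNn_prime // hx. Qed.

(* The images of [d_1(u)] and [d_2(u)] under evaluation, with [x], [y], [z]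
   standing for [e_11], [e_22], [e_21 e_12]. *)
Definition d1_eval : S := 1 + serC x * X.

Lemma prod_sshift_d1_eval : \prod_(a < p) (sshift a d1_eval : S) = 1.
Proof.
have shiftE (a : 'I_p) : (sshift a d1_eval : S) * linX 0 a = linX (- x) a.
  rewrite sshiftD sshift1 sshiftCM sshiftX /linX addr0.
  transitivity ((1 - serC (a : nat)%:R * X)
     + serC x * X * ((1 - serC (a : nat)%:R * X) * geom (a : nat)%:R)); first by ring.
  by rewrite mul_geom rmorphD rmorphN; ring.
apply: (ser_rreg (E_coef0 chC)); rewrite mul1r -{1}(prod_linX_fixed chC fixed0).
by rewrite -big_split /=; under eq_bigr do rewrite shiftE; exact: prod_linX_fixed.
Qed.

Variables y z : C.
Hypotheses (hy : y ^+ p = y) (hz : z ^+ 2 = (x + y) * z).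
Local Notation q := (- x - 1).

Let fixedq : q ^+ p = q. Proof. by rewrite exprDn_prime // fixedNx exprNn_prime // expr1n. Qed.
Let fixedy1 : (y - 1) ^+ p = y - 1.
Proof. by rewrite exprDn_prime // hy exprNn_prime // expr1n. Qed.

Definition d2_eval : S := 1 + serC (- y) * X + serC z * (X ^+ 2 * geom q).

Definition quadX (a : nat) : S := linX y a * linX q a.

Lemma sshift_d2_eval a :
  (sshift a d2_eval : S) * (linX 0 a * linX q a) = quadX a + serC z * X ^+ 2.
Proof.
rewrite !sshiftD sshift1 !sshiftCM sshiftX /quadX /linX addr0.
have G := sshiftX2_geom a q; set s := sshift a _ in G *.
transitivity ((1 - serC a%:R * X) * (1 - serC (a%:R + q) * X)
   + serC (- y) * X * (1 - serC (a%:R + q) * X) * ((1 - serC a%:R * X) * geom a%:R)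
   + serC z * (1 - serC (a%:R + q) * X) * ((1 - serC a%:R * X) * s)); first by ring.
rewrite mul_geom G.
transitivity ((1 - serC a%:R * X) * (1 - serC (a%:R + q) * X)
   + serC (- y) * X * (1 - serC (a%:R + q) * X)
   + serC z * X ^+ 2 * ((1 - serC (a%:R + q) * X) * geom (a%:R + q))); first by ring.
by rewrite mul_geom !rmorphD !rmorphN; ring.
Qed.

Lemma prod_quadX : \prod_(a < p) quadX a = E * E.
Proof. by rewrite big_split /= !prod_linX_fixed. Qed.

(* Partial fractions: [X / (L_a L_(a-1)) = 1/L_a - 1/L_(a-1)] telescopes over [F_p]. *)
Lemma sum_sinv_linXM : \sum_(a < p) sinvS (linX (- x) a * linX q a) = 0.
Proof.
apply: (@serX_lreg C); rewrite mulr0 mulr_sumr.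
have pfrac (a : 'I_p) :
    X * sinvS (linX (- x) a * linX q a) = sinvS (linX (- x) a) - sinvS (linX q a).
  apply: (ser_rreg (linXM_coef0 (- x) q a)).
  have I1 := mulr_sinv (linX_coef0 (- x) a); have I2 := mulr_sinv (linX_coef0 q a).
  have I3 := mulr_sinv (linXM_coef0 (- x) q a).
  transitivity (X * ((linX (- x) a * linX q a) * sinvS (linX (- x) a * linX q a))); first by ring.
  transitivity ((linX (- x) a * sinvS (linX (- x) a)) * linX q a
     - (linX q a * sinvS (linX q a)) * linX (- x) a); last by ring.
  by rewrite I1 I2 I3 /linX !rmorphD !rmorphN rmorph1; ring.
rewrite (eq_bigr _ (fun a _ => pfrac a)) sumrB.
have -> : \sum_(a < p) sinvS (linX q a) = \sum_(a < p) sinvS (linX (- x) (ord_pred a)).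
  apply: eq_bigr => a _; congr sinv; rewrite /linX natr_ord_pred; congr (1 - serC _ * X); ring.
by rewrite {1}(reindex_inj (@ord_pred_inj p)) subrr.
Qed.

Lemma prod_quadXDz_unit (e pi c : C) : c = x + y -> e * e = e -> pi * pi = pi ->
  e * z = e * (pi * c) ->
  serC e * \prod_(a < p) (quadX a + serC z * X ^+ 2) = serC e * (E * E).
Proof.
move=> cE ee pipi ez.
rewrite (@mul_prod_eq _ p (serC e) (fun a => quadX a + serC z * X ^+ 2)
  (fun a => quadX a + serC pi * (serC c * X ^+ 2))); last first.
  by move=> a; rewrite !mulrDr; congr (_ + _); rewrite !mulrA -!rmorphM ez !mulrA.
rewrite (@prod_split_idem _ p (serC pi) quadX (fun _ => serC c * X ^+ 2)) -?rmorphM ?pipi //.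
rewrite prod_quadX.
have -> : \prod_(a < p) (quadX a + serC c * X ^+ 2) =
    \prod_(a < p) (linX (y - 1) a * linX (- x) a).
  by apply: eq_bigr => a _; rewrite /quadX /linX cE !rmorphD !rmorphN rmorph1; ring.
by rewrite big_split /= !prod_linX_fixed //; ring.
Qed.

Lemma prod_quadXDz_nil (e c : C) : c = x + y -> e * e = e -> e * c = 0 ->
  serC e * \prod_(a < p) (quadX a + serC z * X ^+ 2) = serC e * (E * E).
Proof.
move=> cE ee ec; pose ez := e * z; pose w := serC ez * X ^+ 2.
rewrite (@mul_prod_eq _ p (serC e) (fun a => quadX a + serC z * X ^+ 2)
  (fun a => linX (- x) a * linX q a + w)); last first.
  move=> a; apply/eqP; rewrite -subr_eq0; apply/eqP.
  transitivity (serC (e * c) * (- X * linX q a) + serC (e * z - e * ez) * X ^+ 2).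
    by rewrite /quadX /linX /w /ez cE !rmorphB !rmorphM !rmorphD !rmorphN; ring.
  by rewrite ec /ez mulrA ee subrr !rmorph0 !mul0r addr0.
have ww : w * w = 0.
  have ezez : ez * ez = 0 by rewrite /ez mulrACA ee -expr2 hz mulrA -cE ec mul0r.
  by rewrite /w -mulrACA -rmorphM ezez rmorph0 mul0r.
have factor (a : 'I_p) : linX (- x) a * linX q a + w
    = (linX (- x) a * linX q a) * (1 + w * sinvS (linX (- x) a * linX q a)).
  set L := linX (- x) a * linX q a.
  have LL : L * sinvS L = 1 := mulr_sinv (linXM_coef0 (- x) q a).
  by rewrite mulrDr mulr1 mulrCA LL mulr1.
rewrite (eq_bigr _ (fun a _ => factor a)) big_split /=.
rewrite (@prod_1Dsqr0 _ p w (fun a => sinvS (linX (- x) a * linX q a))) //.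
by rewrite sum_sinv_linXM mulr0 addr0 mulr1 big_split /= !prod_linX_fixed.
Qed.

(* [c = x + y] satisfies [c^p = c], so [c^(p-1)] is an idempotent; where it
   vanishes [c = 0] and [z^2 = 0], and where it is one [z = c * z c^(p-2)]
   with [z c^(p-2)] idempotent. *)
Lemma prod_quadXDz : \prod_(a < p) (quadX a + serC z * X ^+ 2) = E * E.
Proof.
have [r def_p] : exists r, p = r.+3 by exists (p - 3)%N; lia.
pose c := x + y; have cp : c ^+ r.+3 = c by rewrite -def_p exprDn_prime // hx hy.
pose e1 := c ^+ r.+2; pose e0 := 1 - e1; pose pi := z * c ^+ r.+1.
have e1e1 : e1 * e1 = e1.
  by rewrite /e1 -exprD (_ : (r.+2 + r.+2 = r.+3 + r.+1)%N) 1?exprD ?cp -?exprS //; lia.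
have e0e0 : e0 * e0 = e0.
  transitivity (1 - e1 - e1 + e1 * e1); first by rewrite /e0; ring.
  by rewrite e1e1 /e0; ring.
have e0c : e0 * c = 0 by rewrite /e0 /e1 mulrBl mul1r -exprSr cp subrr.
have pipi : pi * pi = pi.
  transitivity (z ^+ 2 * c ^+ (r.+1 + r.+1)); first by rewrite /pi exprD; ring.
  transitivity (z * c ^+ (r.+3 + r)); last by rewrite exprD cp -exprS.
  by rewrite hz -/c (_ : (r.+3 + r = (r.+1 + r.+1).+1)%N) ?exprS; [ring | lia].
have e1z : e1 * z = e1 * (pi * c).
  by rewrite /pi -mulrA -exprSr -/e1 mulrCA e1e1 mulrC.
have split1 (f : S) : f = serC e0 * f + serC e1 * f.
  by rewrite -mulrDl -rmorphD /e0 subrK rmorph1 mul1r.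
by rewrite [LHS]split1 [RHS]split1 (@prod_quadXDz_nil e0 c) // (@prod_quadXDz_unit e1 pi c).
Qed.

Lemma prod_sinv_sshift_d2_eval : \prod_(a < p) sinvS (sshift a d2_eval) = 1.
Proof.
have shift0 (a : nat) : (sshift a d2_eval : S) 0%N = 1.
  by rewrite /sshift /d2_eval /= !serD ser1 !serCM_coef serX2M_coef /serX /= !mulr0 !addr0.
have prod_shift : \prod_(a < p) (sshift a d2_eval : S) = 1.
  apply: (ser_rreg (EE_coef0 chC)); rewrite mul1r.
  have prod_lin : \prod_(a < p) (linX 0 a * linX q a) = E * E.
    by rewrite big_split /= !prod_linX_fixed.
  rewrite -{1}prod_lin -big_split /=.
  under eq_bigr do rewrite sshift_d2_eval; exact: prod_quadXDz.
transitivity (\prod_(a < p) sinvS (sshift a d2_eval) * \prod_(a < p) (sshift a d2_eval : S)).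
  by rewrite prod_shift mulr1.
rewrite -big_split /= big1 // => a _.
by rewrite mulrC mulr_sinv.
Qed.

End EvaluatedGaussFactors.

(** * Evaluation of [b_i(u)] *)

Section SeriesMap.
Variables (R1 R2 : nzRingType) (f : {rmorphism R1 -> R2}).
Implicit Types (g h : nat -> R1).

Definition smap g : nat -> R2 := fun n => f (g n).

Lemma smap_sone : smap (@sone R1) = @sone R2.
Proof. by apply: funext => n; rewrite /smap /sone rmorph_nat. Qed.

Lemma smap_ssub g h : smap (ssub g h) = ssub (smap g) (smap h).
Proof. by apply: funext => n; rewrite /smap /ssub rmorphB. Qed.

Lemma smap_smul g h : smap (smul g h) = smul (smap g) (smap h).
Proof.
by apply: funext => n; rewrite /smap /smul rmorph_sum; apply: eq_bigr => i _; rewrite rmorphM.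
Qed.

Lemma smap_spow g m : smap (spow g m) = spow (smap g) m.
Proof. by elim: m => [|m IH] /=; rewrite ?smap_sone // smap_smul IH. Qed.

Lemma smap_sinv g : smap (sinv g) = sinv (smap g).
Proof.
apply: funext => n; rewrite /smap /sinv rmorph_sum; apply: eq_bigr => m _.
by rewrite -smap_sone -smap_ssub -smap_spow.
Qed.

Lemma smap_sshift a g : smap (sshift a g) = sshift a (smap g).
Proof.
apply: funext => -[|n] //; rewrite /smap /sshift /= rmorph_sum.
by apply: eq_bigr => r _; rewrite rmorphM rmorph_nat.
Qed.

Lemma smap_prod n (F : nat -> nat -> R1) :
  smap (\big[@smul R1/@sone R1]_(a < n) F a) = \big[@smul R2/@sone R2]_(a < n) smap (F a).
Proof. exact: (big_morph smap smap_smul smap_sone). Qed.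

End SeriesMap.

Lemma smul_deg1l (R : nzRingType) (f g : nat -> R) n :
  f 0%N = 0 -> (forall m, f m.+2 = 0) ->
  smul f g n = if n is n'.+1 then f 1%N * g n' else 0.
Proof.
move=> f0 f2; rewrite /smul; case: n => [|n]; first by rewrite big_ord1 f0 mul0r.
rewrite big_ord_recl f0 mul0r add0r big_ord_recl /= subSS subn0.
by rewrite big1 ?addr0 // => i _; rewrite /bump /= add1n f2 mul0r.
Qed.

Lemma smul_deg1r (R : nzRingType) (f g : nat -> R) n :
  g 0%N = 0 -> (forall m, g m.+2 = 0) ->
  smul f g n = if n is n'.+1 then f n' * g 1%N else 0.
Proof.
move=> g0 g2; rewrite /smul; case: n => [|n]; first by rewrite big_ord1 g0 mulr0.
rewrite big_ord_recr /= subnn g0 mulr0 addr0 big_ord_recr /= subSn // subnn.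
rewrite big1 ?add0r // => i _.
by rewrite (_ : (n.+1 - i = (n - i.+1).+2)%N) ?g2 ?mulr0 //; have := ltn_ord i; lia.
Qed.

Lemma addrr_eq0_pchar (R : nzRingType) (p : nat) (u : R) :
  p \in [pchar R] -> (2 < p)%N -> u + u = 0 -> u = 0.
Proof.
move=> chR p_gt2 uu; have p_odd : odd p.
  by case/even_prime: (pcharf_prime chR) => // p2; rewrite p2 in p_gt2.
have : (p.+1)%:R * u = u by rewrite -natr1 (pcharf0 chR) add0r mul1r.
rewrite -(odd_double_half p.+1) /= p_odd add0n -muln2 natrM -mulrA.
by rewrite (mulr_natl u 2) mulr2n uu mulr0 => <-.
Qed.

Section Gl11Relations.
Variables (R : nzRingType) (e : 'I_2 -> 'I_2 -> R).
Hypothesis UR : URel e.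
Hypothesis addrr_eq0 : forall u : R, u + u = 0 -> u = 0.
Local Notation x := (e 0 0).
Local Notation y := (e 1 1).
Local Notation f := (e 1 0).
Local Notation g := (e 0 1).

Ltac simp_sgn := rewrite /sgn /par /=
  ?(add0n, addn0, addn1, muln0, mul0n, muln1, mul1n, expr0, expr1, sqrrN, expr1n,
    mul1r, mulr1, mul0r, mulr0, subr0, sub0r, mulN1r, mulNr, opprK, oppr0).

Lemma gl11_comm_xy : x * y = y * x.
Proof. by have := UR 0 0 1 1; simp_sgn; move=> /eqP; rewrite subr_eq0 => /eqP. Qed.

Lemma gl11_comm_xf : x * f = f * x - f.
Proof. by have := UR 0 0 1 0; simp_sgn; move=> /(canRL (subrK _)); rewrite addrC. Qed.

Lemma gl11_comm_xg : x * g = g * x + g.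
Proof. by have := UR 0 0 0 1; simp_sgn; move=> /(canRL (subrK _)); rewrite addrC. Qed.

Lemma gl11_comm_yf : y * f = f * y + f.
Proof. by have := UR 1 1 1 0; simp_sgn; move=> /(canRL (subrK _)); rewrite addrC. Qed.

Lemma gl11_comm_yg : y * g = g * y - g.
Proof. by have := UR 1 1 0 1; simp_sgn; move=> /(canRL (subrK _)); rewrite addrC. Qed.

Lemma gl11_anticomm_fg : f * g + g * f = y + x.
Proof. by have := UR 1 0 0 1; simp_sgn. Qed.

Lemma gl11_sqr_f : f * f = 0.
Proof. by apply: addrr_eq0; have := UR 1 0 1 0; simp_sgn. Qed.

Lemma gl11_exprNx_g m : (- x) ^+ m * g = g * (- x - 1) ^+ m.
Proof.
elim: m => [|m IH]; first by rewrite !expr0 mulr1 mul1r.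
have Nxg : - x * g = g * (- x - 1) by rewrite mulNr gl11_comm_xg opprD mulrBr mulrN mulr1.
by rewrite exprS -mulrA IH mulrA Nxg -mulrA -exprS.
Qed.

Lemma gl11_comm_x_fg : x * (f * g) = (f * g) * x.
Proof. by rewrite mulrA gl11_comm_xf mulrBl -!mulrA gl11_comm_xg mulrDr addrK. Qed.

Lemma gl11_comm_y_fg : y * (f * g) = (f * g) * y.
Proof. by rewrite mulrA gl11_comm_yf mulrDl -!mulrA gl11_comm_yg mulrBr subrK. Qed.

Lemma gl11_sqr_fg : (f * g) * (f * g) = (x + y) * (f * g).
Proof.
have gf : g * f = y + x - f * g by rewrite -gl11_anticomm_fg [f * g + _]addrC addrK.
have fy : f * y = y * f - f by rewrite gl11_comm_yf addrK.
have fx : f * x = x * f + f by rewrite gl11_comm_xf subrK.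
transitivity (f * (g * f) * g); first by rewrite !mulrA.
rewrite gf mulrBr mulrBl (mulrA f f) gl11_sqr_f !mul0r subr0 mulrDr mulrDl fy fx.
by rewrite mulrBl mulrDl -!mulrA [x * _ + _]addrC addrA subrK addrC mulrDl.
Qed.

End Gl11Relations.

Section Bicommutant.
Variables (R : nzRingType) (A : R -> Prop).
Hypothesis commA : forall u v, A u -> A v -> u * v = v * u.

Definition centralizes (v : R) := forall u, A u -> u * v = v * u.

Definition bicommutant : {pred R} := fun u => `[< forall v, centralizes v -> u * v = v * u >].

Lemma bicommutantP u :
  reflect (forall v, centralizes v -> u * v = v * u) (u \in bicommutant).
Proof. exact: asboolP. Qed.

Lemma mem_bicommutant u : A u -> u \in bicommutant.
Proof. by move=> Au; apply/bicommutantP => v /(_ u Au). Qed.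

Lemma bicommutant_subring_closed : subring_closed bicommutant.
Proof.
split; first by apply/bicommutantP => v _; rewrite mul1r mulr1.
  move=> u w /bicommutantP hu /bicommutantP hw; apply/bicommutantP => v cv.
  by rewrite mulrBl mulrBr hu ?hw.
move=> u w /bicommutantP hu /bicommutantP hw; apply/bicommutantP => v cv.
by rewrite -mulrA hw // mulrA hu // mulrA.
Qed.

Lemma bicommutant_mulC u w : u \in bicommutant -> w \in bicommutant -> u * w = w * u.
Proof.
move=> /bicommutantP hu /bicommutantP hw.
by apply: hu => a Aa; apply/esym/hw => b Ab; apply: commA.
Qed.

End Bicommutant.

Section BserEval.
Variables (R : nzRingType) (p : nat).
Hypotheses (chR : p \in [pchar R]) (p_gt2 : (2 < p)%N).
Variable e : 'I_2 -> 'I_2 -> R.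
Hypotheses (UR : URel e) (e_fixed : forall i, e i i ^+ p = e i i).
Local Notation x := (e 0 0).
Local Notation y := (e 1 1).
Local Notation z := (e 1 0 * e 0 1).

Definition gl11_xyz (v : R) := v = x \/ v = y \/ v = z.

Let xyz_comm u v : gl11_xyz u -> gl11_xyz v -> u * v = v * u.
Proof.
have cxy := gl11_comm_xy UR; have cxz := gl11_comm_x_fg UR; have cyz := gl11_comm_y_fg UR.
by move=> [|[|]]-> [|[|]]->.
Qed.

(* The bicommutant of [x], [y], [z] is a commutative ring, in which the series
   computations of the previous section apply. *)
Record xyz_ring := XyzElt { xyz_val : R; _ : xyz_val \in bicommutant gl11_xyz }.
HB.instance Definition _ := [isSub for xyz_val].
HB.instance Definition _ := [Choice of xyz_ring by <:].
HB.instance Definition _ := GRing.SubChoice_isSubNzRing.Build R (bicommutant gl11_xyz)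
  xyz_ring (bicommutant_subring_closed gl11_xyz).

Let xyz_mulC : commutative (@GRing.mul xyz_ring).
Proof.
by move=> u w; apply: val_inj; rewrite !rmorphM; apply: (bicommutant_mulC xyz_comm); apply: valP.
Qed.
HB.instance Definition _ := GRing.PzRing_hasCommutativeMul.Build xyz_ring xyz_mulC.

Let chC : p \in [pchar xyz_ring].
Proof.
case/andP: chR => p_pr /eqP p0; apply/andP; split => //.
by apply/eqP/val_inj; rewrite rmorph_nat rmorph0.
Qed.

Definition xc : xyz_ring := XyzElt (mem_bicommutant (or_introl erefl)).
Definition yc : xyz_ring := XyzElt (mem_bicommutant (or_intror (or_introl erefl))).
Definition zc : xyz_ring := XyzElt (mem_bicommutant (or_intror (or_intror erefl))).

Let xc_fixed : xc ^+ p = xc. Proof. by apply: val_inj; rewrite rmorphXn e_fixed. Qed.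
Let yc_fixed : yc ^+ p = yc. Proof. by apply: val_inj; rewrite rmorphXn e_fixed. Qed.
Let zc_sqr : zc ^+ 2 = (xc + yc) * zc.
Proof.
have two_reg (u : R) : u + u = 0 -> u = 0 by apply: addrr_eq0_pchar chR p_gt2.
by apply: val_inj; rewrite rmorphXn rmorphM rmorphD expr2 (gl11_sqr_fg UR two_reg).
Qed.

Variables (Y : nzRingType) (phi : {rmorphism Y -> R}) (t : 'I_2 -> 'I_2 -> nat -> Y).
Hypotheses (ev_t1 : forall i j, phi (t i j 1%N) = sgn R (par i) * e i j)
           (ev_t2 : forall i j r, (2 <= r)%N -> phi (t i j r) = 0).
Local Notation S := (ser xyz_ring).

Let ev_tser0 i j : phi (tser t i j 0) = (i == j)%:R.
Proof. by rewrite /tser /= rmorph_nat. Qed.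
Let ev_tser1 i j : phi (tser t i j 1) = sgn R (par i) * e i j.
Proof. exact: ev_t1. Qed.
Let ev_tser2 i j m : phi (tser t i j m.+2) = 0.
Proof. exact: ev_t2. Qed.

Lemma smap_d1ser : smap phi (d1ser t) = smap val (d1_eval xc).
Proof.
apply: funext => -[|[|m]]; rewrite /d1ser /smap /d1_eval serD ser1 serCM_coef /serX /=.
- by rewrite ev_tser0 mulr0 addr0.
- by rewrite ev_tser1 /sgn /par /= expr0 mul1r mulr1 add0r.
- by rewrite ev_tser2 mulr0 addr0.
Qed.

Let sinv_d1_eval : sinv (d1_eval xc) = geom (- xc) :> S.
Proof.
have d1_0 : (d1_eval xc : S) 0%N = 1.
  by rewrite /d1_eval serD ser1 serCM_coef /serX /= mulr0 addr0.
apply: (ser_rreg d1_0); rewrite mulrC mulr_sinv // mulrC /d1_eval.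
by have := mul_geom (- xc); rewrite rmorphN mulNr opprK => ->.
Qed.

Lemma smap_d2ser : smap phi (d2ser t) = smap val (d2_eval xc yc zc).
Proof.
rewrite /d2ser smap_ssub !smap_smul smap_sinv smap_d1ser -smap_sinv sinv_d1_eval.
apply: funext => n; rewrite /ssub /smap /d2_eval !serD ser1 !serCM_coef serX2M_coef /serX.
rewrite smul_deg1r; try by [rewrite /= ev_tser0 | move=> m; rewrite /= ev_tser2].
case: n => [|n]; first by rewrite subr0 ev_tser0 /= !mulr0 !addr0.
rewrite smul_deg1l; try by [rewrite /= ev_tser0 | move=> m; rewrite /= ev_tser2].
case: n => [|m].
  by rewrite mul0r subr0 ev_tser1 /sgn /par /= expr1 mulN1r mulr1 mulr0 addr0 add0r.
rewrite ev_tser2 !ev_tser1 /geom /sgn /par /= expr1 expr0 mulN1r mul1r sub0r !mulNr opprK.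
rewrite mulr0 !add0r.
have valX (u : xyz_ring) k : xyz_val (u ^+ k) = xyz_val u ^+ k := rmorphXn val k u.
rewrite !valX -mulrA (_ : xyz_val (- xc) = - x) // (_ : xyz_val (- xc - 1) = - x - 1) //.
by rewrite (gl11_exprNx_g UR) mulrA oppr0 add0r.
Qed.

Lemma bser_eval_eq0 (i : 'I_2) n : (0 < n)%N -> phi (bser p t i n) = 0.
Proof.
move=> n_gt0.
suff /(congr1 (fun g => g n)) : smap phi (bser p t i) = smap val (1 : S).
  by rewrite /smap /= ser1 (negbTE (lt0n_neq0 n_gt0)) rmorph0.
rewrite /bser; case: ifP => _.
  rewrite (smap_prod phi p (fun a => sshift a (d1ser t))).
  under eq_bigr do rewrite smap_sshift smap_d1ser -smap_sshift.
  rewrite -(smap_prod val p (fun a => sshift a (d1_eval xc))); congr smap.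
  exact: prod_sshift_d1_eval.
rewrite (smap_prod phi p (fun a => sinv (sshift a (d2ser t)))).
under eq_bigr do rewrite smap_sinv smap_sshift smap_d2ser -smap_sshift -smap_sinv.
rewrite -(smap_prod val p (fun a => sinv (sshift a (d2_eval xc yc zc)))); congr smap.
exact: prod_sinv_sshift_d2_eval.
Qed.

End BserEval.

(** * Algebra homomorphisms *)

Section AlgHom.
Variable k : fieldType.
Implicit Types A B Q : algType k.

Lemma alg_hom_comp A B Q (f : A -> B) (g : B -> Q) :
  alg_hom f -> alg_hom g -> alg_hom (fun a => g (f a)).
Proof.
move=> [fD [fZ [f1 fM]]] [gD [gZ [g1 gM]]].
by split=> [u v|]; [|split=> [c u|]; [|split=> [|u v]]]; rewrite ?fD ?fZ ?f1 ?fM.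
Qed.

Lemma alg_hom_rmorphism A B (f : A -> B) :
  alg_hom f -> exists g : {rmorphism A -> B}, g =1 f.
Proof.
move=> [fD [_ [f1 fM]]]; have f0 : f 0 = 0 by apply: (addrI (f 0)); rewrite -fD !addr0.
pose g : {rmorphism A -> B} := HB.pack f (GRing.isNmodMorphism.Build _ _ f (conj f0 fD))
  (GRing.isMonoidMorphism.Build _ _ f (conj f1 fM)).
by exists g.
Qed.

Lemma alg_hom_factor A B Q (pi : A -> Q) (f : A -> B) :
  alg_hom pi -> surj pi -> alg_hom f -> (forall a, pi a = 0 -> f a = 0) ->
  exists g : Q -> B, alg_hom g /\ forall a, g (pi a) = f a.
Proof.
move=> hpi /(_ _)/cid pi_surj hf ker_pi.
have [fr frE] := alg_hom_rmorphism hf; have [pir pirE] := alg_hom_rmorphism hpi.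
pose sec w := sval (pi_surj w); have secK w : pi (sec w) = w := svalP (pi_surj w).
have gE a w : pi a = w -> f (sec w) = f a.
  move=> <-; apply/eqP; rewrite -subr_eq0 -!frE -rmorphB frE; apply/eqP/ker_pi.
  by rewrite -pirE rmorphB !pirE secK subrr.
case: hf => fD [fZ [f1 fM]]; case: hpi => piD [piZ [pi1 piM]].
exists (fun w => f (sec w)); split; last by move=> a; apply: gE.
split=> [u v|]; first by rewrite (gE (sec u + sec v)) ?fD // piD !secK.
split=> [c u|]; first by rewrite (gE (c *: sec u)) ?fZ // piZ secK.
split; first by rewrite (gE 1).
by move=> u v; rewrite (gE (sec u * sec v)) ?fM // piM !secK.
Qed.

End AlgHom.

Lemma in_ideal_gen (R : nzRingType) (G : R -> Prop) g : G g -> in_ideal G g.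
Proof.
move=> Gg; exists 1%N, (fun _ => 1), (fun _ => g), (fun _ => 1).
by split=> //; rewrite big_ord1 mul1r mulr1.
Qed.

Lemma rmorph_lideal_eq0 (R S : nzRingType) (f : {rmorphism R -> S}) (G : R -> Prop) y :
  (forall g, G g -> f g = 0) -> in_lideal G y -> f y = 0.
Proof.
move=> fG [n [a [g [Gg ->]]]]; rewrite rmorph_sum big1 // => m _.
by rewrite rmorphM (fG (g m)) ?mulr0.
Qed.

Section RmorphURel.
Variables (R S : nzRingType) (f : {rmorphism R -> S}).

Lemma rmorph_sgn n : f (sgn R n) = sgn S n.
Proof. by rewrite /sgn rmorphXn rmorphN1. Qed.

Lemma URel_rmorph e : URel e -> URel (fun i j => f (e i j)).
Proof.
move=> UR i j a b; have := congr1 f (UR i j a b).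
by rewrite !(rmorphB, rmorphM, rmorph_sgn, rmorph_nat).
Qed.

Lemma URel_rmorph_inj e : injective f -> URel (fun i j => f (e i j)) -> URel e.
Proof.
move=> f_inj URf i j a b; apply: f_inj.
by rewrite !(rmorphB, rmorphM, rmorph_sgn, rmorph_nat); apply: URf.
Qed.

End RmorphURel.

Section SurjectiveOnGenerators.
Variables (k : fieldType) (A U : algType k) (f : A -> U) (e : 'I_2 -> 'I_2 -> U).
Hypotheses (hf : alg_hom f) (HU : is_Ugl11 e).

Definition image_pred : {pred U} := fun u => `[< exists a, f a = u >].

Lemma image_predP u : reflect (exists a, f a = u) (u \in image_pred).
Proof. exact: asboolP. Qed.

Lemma image_subalg_closed : GRing.subalg_closed image_pred.
Proof.
have [fr frE] := alg_hom_rmorphism hf; case: hf => _ [fZ _].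
split; first by apply/image_predP; exists 1; rewrite -frE rmorph1.
  move=> c u v /image_predP[a <-] /image_predP[b <-]; apply/image_predP.
  by exists (c *: a + b); rewrite -!frE rmorphD !frE fZ.
move=> u v /image_predP[a <-] /image_predP[b <-]; apply/image_predP.
by exists (a * b); rewrite -!frE rmorphM.
Qed.

Record image_subalg := ImageSubalg { image_val : U; _ : image_val \in image_pred }.
HB.instance Definition _ := [isSub for image_val].
HB.instance Definition _ := [Choice of image_subalg by <:].
HB.instance Definition _ :=
  GRing.SubChoice_isSubAlgebra.Build k U image_pred image_subalg image_subalg_closed.

(* The image of [f] is a subalgebra containing the generators, hence all of [U]. *)
Lemma alg_hom_surj_gens : (forall i j, exists a, f a = e i j) -> surj f.
Proof.
case: HU => UR [U_univ U_uniq] e_im u.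
have e_in i j : e i j \in image_pred by apply/image_predP.
pose eI i j : image_subalg := ImageSubalg (e_in i j).
have URI : URel eI by apply: (URel_rmorph_inj val_inj).
have [g [g_hom gE]] := U_univ _ eI URI.
have val_g : alg_hom (fun u => val (g u)) by apply: alg_hom_comp g_hom _.
have id_hom : alg_hom (fun u : U => u) by [].
have := U_uniq U _ _ val_g id_hom (fun i j => congr1 val (gE i j)) u.
by move=> <-; apply/image_predP; case: (g u).
Qed.

End SurjectiveOnGenerators.

Theorem lemma2p7 (k : closedFieldType) (p : nat)
  (Hp : prime p) (Hp2 : (2 < p)%N) (Hchar : p \in [pchar k])
  (Y : algType k) (t : 'I_2 -> 'I_2 -> nat -> Y) (HY : is_Yangian t)
  (U : algType k) (e : 'I_2 -> 'I_2 -> U) (HU : is_Ugl11 e)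
  (ev : Y -> U) (Hev : alg_hom ev)
  (Hev1 : forall i j, ev (t i j 1%N) = sgn U (par i) * e i j)
  (Hev2 : forall i j r, (2 <= r)%N -> ev (t i j r) = 0)
  (* Y^[p] = Y / Y Z_p(Y)_+ *)
  (Yp : algType k) (piY : Y -> Yp) (HpiY : alg_hom piY) (HpiYs : surj piY)
  (HkerY : forall y, piY y = 0 <->
     in_lideal (fun z => exists (i : 'I_2) (r : nat), (0 < r)%N /\
                          z = bser p t i (r * p)%N) y)
  (* U^[p](gl_{1|1}) = U / J_p *)
  (Up : algType k) (piU : U -> Up) (HpiU : alg_hom piU) (HpiUs : surj piU)
  (HkerU : forall x, piU x = 0 <->
     in_ideal (fun z => exists i : 'I_2, z = e i i ^+ p - e i i) x) :
  exists evp : Yp -> Up,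
    alg_hom evp /\ surj evp /\ forall y, evp (piY y) = piU (ev y).
Proof.
have [piUr piUrE] := alg_hom_rmorphism HpiU.
have [evr evrE] := alg_hom_rmorphism Hev.
have [phi phiE] := alg_hom_rmorphism (alg_hom_comp Hev HpiU).
have chUp : p \in [pchar Up] by rewrite pchar_lalg.
have URp : URel (fun i j => piU (e i j)).
  by move=> i j a b; rewrite -!piUrE; apply: (URel_rmorph piUr HU.1).
have e_fixed i : piU (e i i) ^+ p = piU (e i i).
  apply/eqP; rewrite -subr_eq0 -!piUrE -rmorphXn -rmorphB piUrE.
  by apply/eqP/HkerU/in_ideal_gen; exists i.
have ev_t1 i j : phi (t i j 1%N) = sgn Up (par i) * piU (e i j).
  by rewrite phiE Hev1 -!piUrE rmorphM rmorph_sgn.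
have ev_t2 i j r : (2 <= r)%N -> phi (t i j r) = 0.
  by move=> r_ge2; rewrite phiE Hev2 // -piUrE rmorph0.
have ker_piY y : piY y = 0 -> piU (ev y) = 0.
  move/HkerY/(rmorph_lideal_eq0 (f := phi)); rewrite phiE; apply=> _ [i [r [r_gt0 ->]]].
  by rewrite (bser_eval_eq0 chUp Hp2 URp e_fixed ev_t1 ev_t2) // muln_gt0 r_gt0 prime_gt0.
have ev_surj : surj ev.
  apply: alg_hom_surj_gens Hev HU _ => i j; exists (sgn Y (par i) * t i j 1%N).
  by rewrite -evrE rmorphM rmorph_sgn evrE Hev1 mulrA -expr2 /sgn sqrr_sign mul1r.
have [evp [evp_hom evpE]] := alg_hom_factor HpiY HpiYs (alg_hom_comp Hev HpiU) ker_piY.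
exists evp; split=> //; split=> // w.
have [u <-] := HpiUs w; have [y <-] := ev_surj u.
by exists (piY y).
Qed.
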